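(* Let $u\equiv 0\pmod{12}$ and $v\equiv 2,4\pmod 6$. Then $\Phi(u\times v,4,2)\le\left\lfloor\frac{u}{4}\left(\left\lfloor\frac{uv-1}{3}\left\lfloor\frac{uv-2}{2}\right\rfloor\right\rfloor-1\right)\right\rfloor-1$.
   Context: A 2-D $(u\times v,4,2)$-OOC is a family $\mathcal C$ of $u\times v$ $(0,1)$-matrices of Hamming weight $4$ such that for all $A=(a_{ij}),B=(b_{ij})\in\mathcal C$ and integers $r$ with $A\ne B$ or $r\not\equiv0\pmod v$, $\sum_{i,j}a_{ij}b_{i,j+r}\le 2$ (column indices mod $v$). $\Phi(u\times v,4,2)$ is the largest size of such a code. *)

From HB Require Import structures.
From mathcomp Require Import all_boot all_order all_algebra.
Set Implicit Arguments. Unset Strict Implicit. Unset Printing Implicit Defensive.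

(* Column index j shifted cyclically by r, i.e. (j + r) mod v.
   (insubd is only a totality device: for v > 0 the value is always in range.) *)
Definition col_shift (v : nat) (j : 'I_v) (r : nat) : 'I_v :=
  insubd j ((j + r) %% v).

Definition hweight (u v : nat) (A : 'M[bool]_(u, v)) : nat :=
  \sum_(i < u) \sum_(j < v) (A i j : nat).

Definition corr (u v : nat) (A B : 'M[bool]_(u, v)) (r : nat) : nat :=
  \sum_(i < u) \sum_(j < v) ((A i j && B i (col_shift j r)) : nat).

(* C is a 2-D (u x v, 4, 2)-OOC.  Integer shifts r are represented by
   natural numbers r (every residue mod v is attained); r = 0 mod v
   iff r %% v == 0. *)
Definition is_OOC (u v : nat) (C : {set 'M[bool]_(u, v)}) : bool :=
  [forall A in C, hweight A == 4] &&
  [forall A in C, forall B in C, forall r : 'I_v,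
     ((A != B) || (r %% v != 0)) ==> (corr A B r <= 2)].

Definition Phi (u v : nat) : nat :=
  \max_(C : {set 'M[bool]_(u, v)} | is_OOC C) #|C|.

From mathcomp Require Import all_boot all_order all_algebra.
From mathcomp Require Import zify.
Set Implicit Arguments. Unset Strict Implicit. Unset Printing Implicit Defensive.

(* The cyclic shifts (A, s) of the codewords A of a code C are 4-subsets
   ("blocks") of the n = uv cells of the array, and the OOC condition says
   that two distinct blocks share at most 2 cells: every triple of cells lies
   in at most one block.  For a cell p let deg p be the number of blocks
   through p and excess p the number of ordered pairs (a, y) such that
   {p, a, y} lies in no block.  Counting pairs and triples through p gives
       excess p + 6 deg p = (n - 1)(n - 2).
   Here n = 24m, and the half-period shift sigma is a fixed-point-free
   involution that permutes the blocks; it pairs off the blocks through p and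
   sigma p, which forces at least two uncovered triples {p, sigma p, y}, hence
   excess p >= 6 and deg p <= D := 96 m^2 - 12 m - 1.  Equality at every cell
   would make every excess equal to 8, and a short configuration argument
   then exhibits five distinct "partners" of a cell where only four exist.
   Summing, 4 v |C| = sum_p deg p < n D, i.e. |C| <= 3 a D - 1 for u = 12 a,
   which is the stated bound. *)

Section FiniteCounting.
Variable T : finType.
Implicit Types (A : {pred T}) (s : seq T).

Lemma card_indicator (A : {set T}) (P : pred T) :
  #|[set x in A | P x]| = \sum_(x in A) (P x : nat).
Proof.
rewrite -sum1dep_card [LHS]big_mkcond [RHS]big_mkcond.
by apply: eq_bigr => x _; case: (x \in A); case: (P x).
Qed.

Lemma card_sum_bool (P : pred T) : #|[set x | P x]| = \sum_x (P x : nat).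
Proof.
rewrite -sum1dep_card big_mkcond /=.
by apply: eq_bigr => x _; case: (P x).
Qed.

Lemma size_le_card s A : uniq s -> {subset s <= A} -> size s <= #|A|.
Proof. by move=> /card_uniqP <- sA; apply/subset_leq_card/subsetP. Qed.

Lemma card_le_size_sub s A :
  uniq s -> {subset s <= A} -> #|A| <= size s -> {subset A <= s}.
Proof.
move=> /card_uniqP us sA leA; have sA' : s \subset A by apply/subsetP.
have [le eqA] := subset_leqif_card sA'.
by apply/subsetP; rewrite -eqA eqn_leq le us leA.
Qed.

Lemma sub_size_le_card s A :
  {subset A <= s} -> size s <= #|A| -> {subset s <= A}.
Proof.
move=> As les; have As' : A \subset s by apply/subsetP.
have [le eqA] := subset_leqif_card As'.
by apply/subsetP; rewrite -eqA eqn_leq le (leq_trans (card_size s) les).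
Qed.

Lemma exists_outside s A : size s < #|A| -> exists2 c, c \in A & c \notin s.
Proof.
move=> lt; have /subsetPn [c cA cs] : ~~ (A \subset s).
  by apply: contraTN lt => /subset_leq_card le; rewrite -leqNgt (leq_trans le) ?card_size.
by exists c.
Qed.

Lemma even_card_involution (f : T -> T) (S : {set T}) :
  involutive f -> (forall x, x \in S -> f x \in S) -> (forall x, f x != x) ->
  2 %| #|S|.
Proof.
rewrite dvdn2; move=> fK fS fx; have [n] := ubnP #|S|; elim: n S fS => // n IH S fS.
case: (set_0Vmem S) => [-> | [x xS]]; first by rewrite cards0.
set S' := S :\ x :\ f x.
have S'S y : y \in S' -> f y \in S'.
  rewrite !inE => /and3P [yfx yx yS]; rewrite fS // andbT.
  by rewrite (can2_eq fK fK) fK yx (can2_eq fK fK) yfx.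
have -> : #|S| = #|S'|.+2.
  by rewrite (cardsD1 x S) xS (cardsD1 (f x) (S :\ x)) !inE fx fS.
rewrite ltnS /= => /ltnW /(IH S' S'S); by case: odd.
Qed.
End FiniteCounting.

Section Packing.
Variables (Pt Bk : finType) (inb : Pt -> Bk -> bool) (B : {set Bk}).
Hypothesis block_size : forall k, k \in B -> #|[set p | inb p k]| = 4.
Hypothesis block_meet : forall k k', k \in B -> k' \in B -> k != k' ->
  #|[set p | inb p k && inb p k']| <= 2.

Local Notation n := #|Pt|.

Definition through (S : {set Bk}) (y : Pt) : {set Bk} := [set k in S | inb y k].

Definition deg p := #|through B p|.
Definition lam p a := #|through (through B p) a|.
Definition tri p a y := #|through (through (through B p) a) y|.

Lemma throughC S p a : through (through S p) a = through (through S a) p.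
Proof. by apply/setP => k; rewrite !inE andbAC. Qed.

Lemma triC12 p a y : tri p a y = tri a p y.
Proof. by rewrite /tri (throughC B p a). Qed.

Lemma triC23 p a y : tri p a y = tri p y a.
Proof. by rewrite /tri (throughC (through B p) a y). Qed.

Lemma double_count (S : {set Bk}) (X : {set Pt}) :
  \sum_(y in X) #|through S y| = \sum_(k in S) #|[set y in X | inb y k]|.
Proof.
under eq_bigr do rewrite card_indicator.
under [RHS]eq_bigr do rewrite card_indicator.
exact: exchange_big.
Qed.

Lemma double_count_const (S : {set Bk}) (X : {set Pt}) c :
  (forall k, k \in S -> #|[set y in X | inb y k]| = c) ->
  \sum_(y in X) #|through S y| = #|S| * c.
Proof. by move=> HS; rewrite double_count (eq_bigr _ HS) sum_nat_const. Qed.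

Lemma in_through S y k : (k \in through S y) = (k \in S) && inb y k.
Proof. by rewrite inE. Qed.

(* Each block through p has 3 further points, and each block through p, a
   has 2 further points. *)
Lemma deg_lam p : \sum_(a in [set~ p]) lam p a = 3 * deg p.
Proof.
rewrite (double_count_const (c:=3)) 1?mulnC // => k; rewrite in_through => /andP [kB pk].
have := block_size kB; rewrite (cardsD1 p) inE pk => /eqP; rewrite eqSS => /eqP <-.
by apply: eq_card => y; rewrite !inE andbC.
Qed.

Lemma lam_tri p a : a != p ->
  \sum_(y in [set~ p] :\ a) tri p a y = 2 * lam p a.
Proof.
move=> ap; rewrite (double_count_const (c:=2)) 1?mulnC // => k.
rewrite !in_through => /andP [/andP [kB pk] ak].
have := block_size kB; rewrite (cardsD1 p) (cardsD1 a) !inE pk ak ap /= => /eqP.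
rewrite !eqSS => /eqP <-.
by apply: eq_card => y; rewrite !inE andbA.
Qed.

Lemma tri_le1 p a y : uniq [:: p; a; y] -> tri p a y <= 1.
Proof.
move=> upay; rewrite leqNgt; apply/negP => /card_gt1P [k [k' [kT k'T kk']]].
move: kT k'T; rewrite !in_through.
move=> /andP [/andP [/andP [kB pk] ak] yk] /andP [/andP [/andP [k'B pk'] ak'] yk'].
have := block_meet kB k'B kk'; apply/negP; rewrite -ltnNge.
apply: (size_le_card upay) => q; rewrite !inE => /or3P [] /eqP -> ; apply/andP; split => //.
Qed.

Definition gap p a := [set y | [&& y != p, y != a & tri p a y == 0]].

Lemma in_gap p a y : (y \in gap p a) = [&& y != p, y != a & tri p a y == 0].
Proof. by rewrite inE. Qed.

(* Each other point y lies in 0 or 1 blocks through p, a. *)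
Lemma card_gap p a : a != p -> #|gap p a| + 2 * lam p a = n - 2.
Proof.
move=> ap; set X := [set~ p] :\ a.
have -> : #|gap p a| = #|[set y in X | tri p a y == 0]|.
  by apply: eq_card => y; rewrite !inE; case: (y != p); case: (y != a).
rewrite card_indicator -lam_tri // -big_split /=.
rewrite (eq_bigr (fun _ => 1)) => [|y]; last first.
  rewrite !inE => /andP [ya yp].
  have := @tri_le1 p a y; rewrite /= !inE negb_or eq_sym ap eq_sym yp eq_sym ya.
  by case: (tri p a y) => [|[|?]] // /(_ isT).
have := cardsD1 a [set~ p]; rewrite sum1_card cardsC1 !inE ap /= -/X; lia.
Qed.

Definition excess p := \sum_(a in [set~ p]) #|gap p a|.

(* The fundamental identity, summing card_gap over a. *)
Lemma excess_deg p : excess p + 6 * deg p = (n - 1) * (n - 2).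
Proof.
rewrite (_ : 6 = 2 * 3) // -mulnA -deg_lam big_distrr -big_split /=.
rewrite (eq_bigr (fun _ => n - 2)) => [|a]; last by rewrite !inE => ap; apply: card_gap.
by rewrite sum_nat_const cardsC1 subn1.
Qed.

Lemma gap_sym p a y : a != p -> y \in gap p a -> a \in gap p y.
Proof. by move=> ap; rewrite !in_gap => /and3P [_ ya t0]; rewrite ap eq_sym ya triC23. Qed.

Section DivisibleByFour.
Hypothesis n_mod4 : 4 %| n.

Lemma gap_even p a : a != p -> 2 %| #|gap p a|.
Proof. move=> /card_gap; lia. Qed.

Lemma gap_ge2 p a y : a != p -> y \in gap p a -> 2 <= #|gap p y|.
Proof.
move=> ap yg; have yp : y != p by move: yg; rewrite in_gap => /and3P [].
have : 0 < #|gap p y| by apply/card_gt0P; exists a; exact: gap_sym.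
by have := gap_even yp; lia.
Qed.

(* Each of the |gap p a| points y of gap p a has its own gap of size >= 2. *)
Lemma excess_ge p a : a != p -> 3 * #|gap p a| <= excess p.
Proof.
move=> ap; rewrite /excess (big_setD1 a) ?inE //=.
have : \sum_(y in gap p a) #|gap p y| <= \sum_(y in [set~ p] :\ a) #|gap p y|.
  apply: (sub_le_big (op := addn) leqnn (fun x y => leq_addr y x)) => y; rewrite in_gap !inE.
  by case/and3P => -> -> .
have : \sum_(y in gap p a) 2 <= \sum_(y in gap p a) #|gap p y|.
  by apply: leq_sum => y; apply: gap_ge2.
rewrite sum_nat_const; lia.
Qed.

Section Involution.
Variables (sigma : Pt -> Pt) (tau : Bk -> Bk).
Hypothesis sigmaK : involutive sigma.
Hypothesis sigma_moves : forall p, sigma p != p.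
Hypothesis tauK : involutive tau.
Hypothesis tau_moves : forall k, tau k != k.
Hypothesis inb_sigma : forall p k, inb (sigma p) k = inb p (tau k).
Hypothesis B_tau : forall k, (tau k \in B) = (k \in B).

Lemma sigma_eq p q : (sigma p == q) = (p == sigma q).
Proof. exact: (can2_eq sigmaK sigmaK). Qed.

Lemma through_sigma (S : {set Bk}) y :
  through (tau @^-1: S) (sigma y) = tau @^-1: through S y.
Proof. by apply/setP => k; rewrite !inE inb_sigma. Qed.

Lemma tri_sigma p a y : tri (sigma p) (sigma a) (sigma y) = tri p a y.
Proof.
have BE : B = tau @^-1: B by apply/setP => k; rewrite inE B_tau.
by rewrite /tri {1}BE !through_sigma card_preimset //; apply: (can_inj tauK).
Qed.

(* The blocks through p and sigma p are paired off by tau. *)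
Lemma lam_sigma_even p : 2 %| lam p (sigma p).
Proof.
apply: (even_card_involution tauK _ tau_moves) => k.
rewrite !in_through B_tau -!inb_sigma sigmaK => /andP [/andP [-> ->] ->] //.
Qed.

(* Hence |gap p (sigma p)| = n - 2 - 2 lam = 2 mod 4 is at least 2. *)
Lemma gap_sigma p : 2 <= #|gap p (sigma p)|.
Proof.
have n2 : 2 <= n.
  by rewrite -cardsT (size_le_card (s := [:: p; sigma p])) //= inE eq_sym sigma_moves.
by have := card_gap (sigma_moves p); have := lam_sigma_even p; lia.
Qed.

(* So excess_ge applies with a = sigma p. *)
Lemma excess_ge6 p : 6 <= excess p.
Proof. by have := excess_ge (sigma_moves p); have := gap_sigma p; lia. Qed.

Lemma gap_sigma_closed x b :
  b \in gap x (sigma x) -> sigma b \in gap x (sigma x).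
Proof.
rewrite !in_gap sigma_eq eq_sym (inj_eq (can_inj sigmaK)) eq_sym.
case/and3P => -> -> /eqP t0; rewrite -[in tri x _ _](sigmaK x) tri_sigma.
by rewrite sigmaK triC12 t0.
Qed.

(* Towards a contradiction, suppose every point has the minimal excess 8. *)
Section Tight.
Hypothesis excess8 : forall p, excess p = 8.

(* By excess_ge, every gap now has at most 2 points. *)
Lemma gap_le2 p a : a != p -> #|gap p a| <= 2.
Proof. by move=> /excess_ge; rewrite excess8; lia. Qed.

(* The points a with a nonempty gap p a; each such gap has exactly 2 points,
   so there are 4 partners of p. *)
Definition partners p := [set a in [set~ p] | 0 < #|gap p a|].

Lemma card_partners p : #|partners p| = 4.
Proof.
have := excess8 p; rewrite /excess card_indicator.
rewrite (eq_bigr (fun a => 2 * (0 < #|gap p a|))) => [|a]; last first.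
  by rewrite !inE => ap; have := gap_le2 ap; have := gap_even ap; lia.
by rewrite -big_distrr /=; lia.
Qed.

Lemma partners_of_gap p a y :
  a != p -> y \in gap p a -> (a \in partners p) && (y \in partners p).
Proof.
move=> ap yg; have yp : y != p by move: yg; rewrite in_gap => /and3P [].
rewrite !inE ap yp; apply/andP; split; apply/card_gt0P; first by exists y.
by exists a; apply: gap_sym.
Qed.

Lemma partner_gap_ge2 p a : a \in partners p -> 2 <= #|gap p a|.
Proof. by rewrite !inE => /andP [/gap_even]; lia. Qed.

Lemma gap_sigma_pair x b :
  b \in gap x (sigma x) -> {subset gap x (sigma x) <= [:: b; sigma b]}.
Proof.
move=> bg; apply: card_le_size_sub; last by rewrite gap_le2 // sigma_moves.
  by rewrite /= inE eq_sym sigma_moves.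
by move=> z; rewrite mem_seq2 => /orP [] /eqP -> //; apply: gap_sigma_closed.
Qed.

Lemma partner_fourth x b : b \in gap x (sigma x) ->
  exists2 c, c \in partners x & [&& c \notin [:: sigma x; b; sigma b],
                                   tri x c b == 0 & tri x c (sigma b) == 0].
Proof.
move=> bg; have b'g := gap_sigma_closed bg.
have xx' := sigma_moves x.
have /andP [x'S bS] := partners_of_gap xx' bg.
have /andP [_ b'S] := partners_of_gap xx' b'g.
move: (bg) (b'g); rewrite !in_gap => /and3P [bx bx' _] /and3P [_ b'x' _].
have u3 : uniq [:: sigma x; b; sigma b].
  by rewrite /= !inE negb_or eq_sym bx' eq_sym b'x' eq_sym sigma_moves.
have [c cS cn] : exists2 c, c \in partners x & c \notin [:: sigma x; b; sigma b].
  by apply: exists_outside; rewrite card_partners.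
exists c => //; rewrite cn /=.
have cx : c != x by move: cS; rewrite !inE => /andP [].
have covers : {subset partners x <= rcons [:: sigma x; b; sigma b] c}.
  apply: card_le_size_sub; rewrite ?rcons_uniq ?cn ?card_partners //.
  by move=> z; rewrite mem_rcons !in_cons in_nil orbF => /or4P [] /eqP ->.
have cgap : {subset gap x c <= [:: b; sigma b]}.
  move=> z zg; have /andP [_ zS] := partners_of_gap cx zg.
  move: (zg) (covers z zS); rewrite in_gap mem_rcons !inE => /and3P [_ zc _].
  case/or4P => /eqP zE; first by rewrite zE eqxx in zc.
  - have := gap_sym cx zg; rewrite zE => /(gap_sigma_pair bg) cb.
    by move: cn; rewrite in_cons cb orbT.
  - by rewrite zE eqxx.
  - by rewrite zE eqxx orbT.
have sub := sub_size_le_card cgap (partner_gap_ge2 cS).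
have := sub b; have := sub (sigma b); rewrite !mem_seq2 !eqxx orbT !in_gap.
by move=> /(_ isT) /and3P [_ _ ->] /(_ isT) /and3P [_ _ ->].
Qed.

Lemma sigma_neq p q : (p != sigma q) = (sigma p != q).
Proof. by rewrite sigma_eq. Qed.

Lemma sigma_inj_neq p q : (sigma p != sigma q) = (p != q).
Proof. by rewrite (inj_eq (can_inj sigmaK)). Qed.

Lemma uniq_five x b c : b \in gap x (sigma x) -> c \in partners x ->
  c \notin [:: sigma x; b; sigma b] -> uniq [:: x; sigma x; sigma b; c; sigma c].
Proof.
rewrite in_gap !inE !negb_or => /and3P [bx bx' _] /andP [cx _] /and3P [cx' cb cb'].
have d1 : x != sigma x by rewrite eq_sym.
have d2 : x != sigma b by rewrite sigma_neq eq_sym.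
have d3 : x != c by rewrite eq_sym.
have d4 : x != sigma c by rewrite sigma_neq eq_sym.
have d5 : sigma x != sigma b by rewrite sigma_inj_neq eq_sym.
have d6 : sigma x != c by rewrite eq_sym.
have d7 : sigma x != sigma c by rewrite sigma_inj_neq eq_sym.
have d8 : sigma b != c by rewrite eq_sym.
have d9 : sigma b != sigma c by rewrite sigma_inj_neq eq_sym.
have d10 : c != sigma c by rewrite eq_sym.
by rewrite /= !inE !negb_or d1 d2 d3 d4 d5 d6 d7 d8 d9 d10.
Qed.

Lemma five_partners x b c : b \in gap x (sigma x) -> c \in partners x ->
  c \notin [:: sigma x; b; sigma b] -> tri x c b = 0 -> tri x c (sigma b) = 0 ->
  {subset [:: x; sigma x; sigma b; c; sigma c] <= partners b}.
Proof.
move=> bg cS cn txcb txcb'; move: bg cS cn.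
rewrite in_gap !inE !negb_or => /and3P [bx bx' /eqP txb] /andP [cx _] /and3P [_ cb cb'].
have tc'b : tri (sigma x) (sigma c) (sigma (sigma b)) = 0.
  by rewrite tri_sigma.
rewrite sigmaK in tc'b.
have inS a y : a != b -> y \in gap b a -> a \in partners b.
  by move=> ab /(partners_of_gap ab) /andP [].
move=> z; rewrite !in_cons in_nil orbF => /orP [|/or4P []] /eqP ->.
- apply: (inS _ (sigma x)); rewrite 1?eq_sym // in_gap eq_sym bx' sigma_moves /=.
  by rewrite triC12 triC23 txb.
- apply: (inS _ x); first by rewrite eq_sym.
  rewrite in_gap eq_sym bx eq_sym sigma_moves /=.
  by rewrite triC12 triC23 triC12 txb.
- by rewrite !inE sigma_moves; have := gap_sigma b; lia.
- apply: (inS _ x) => //; rewrite in_gap eq_sym bx eq_sym cx /=.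
  by rewrite triC12 triC23 triC12 txcb.
- apply: (inS _ (sigma x)); first by rewrite -sigma_neq.
  rewrite in_gap eq_sym bx' sigma_inj_neq eq_sym cx /=.
  by rewrite triC12 triC23 triC12 tc'b.
Qed.

Lemma excess_not_all8 (x : Pt) : False.
Proof.
have [b bg] : exists b, b \in gap x (sigma x).
  by apply/card_gt0P; have := gap_sigma x; lia.
have [c cS /and3P [cn /eqP txcb /eqP txcb']] := partner_fourth bg.
have := size_le_card (uniq_five bg cS cn) (five_partners bg cS cn txcb txcb').
by rewrite card_partners.
Qed.
End Tight.

(* Every block has 4 points. *)
Lemma sum_deg : \sum_p deg p = 4 * #|B|.
Proof.
rewrite (eq_bigl (fun y => y \in [set: Pt])) => [|y]; last by rewrite in_setT.
rewrite (double_count_const (c := 4)) 1?mulnC // => k kB.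
by rewrite -(block_size kB); apply: eq_card => y; rewrite !inE.
Qed.

(* The counting bound: if (n - 1)(n - 2) = 6 d + 8, every degree is at most d
   and not all degrees equal d. *)
Lemma packing_bound d (x : Pt) : (n - 1) * (n - 2) = 6 * d + 8 -> 4 * #|B| < n * d.
Proof.
move=> nd; have deg_le p : deg p <= d by have := excess_deg p; have := excess_ge6 p; lia.
rewrite -sum_deg (_ : n * d = \sum_(p : Pt) d); last by rewrite sum_nat_const.
have [deg_d | [p deg_lt]] : (forall p, deg p = d) \/ exists p, deg p < d.
  case: (pickP (fun p => deg p < d)) => [p lt | ge]; [by right; exists p | left => p].
  by apply/eqP; rewrite eqn_leq deg_le leqNgt ge.
- have excess8 p : excess p = 8 by have := excess_deg p; rewrite deg_d; lia.
  by case: (excess_not_all8 excess8 x).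
- rewrite (bigD1 p) // [X in _ < X](bigD1 p) //= -addSn leq_add //.
  by apply: leq_sum => q _; apply: deg_le.
Qed.
End Involution.
End DivisibleByFour.
End Packing.

Section ColumnShift.
Variable v : nat.
Implicit Types (j : 'I_v) (r s : nat).

Lemma col_shift_val j r : val (col_shift j r) = (j + r) %% v.
Proof. by rewrite /col_shift insubdK // unfold_in ltn_pmod // (leq_ltn_trans _ (ltn_ord j)). Qed.

Lemma col_shiftD j r s : col_shift (col_shift j r) s = col_shift j (r + s).
Proof. by apply: val_inj; rewrite !col_shift_val modnDml addnA. Qed.

Lemma col_shift_mod j r : col_shift j (r %% v) = col_shift j r.
Proof. by apply: val_inj; rewrite !col_shift_val modnDmr. Qed.

Lemma col_shift_v j : col_shift j v = j.
Proof. by apply: val_inj; rewrite col_shift_val modnDr modn_small. Qed.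

Lemma col_shift_inj r : injective (fun j => col_shift j r).
Proof.
move=> j k /(congr1 val); rewrite !col_shift_val => /eqP.
by rewrite eqn_modDr !modn_small // => /eqP /val_inj.
Qed.

Lemma col_shift_moves j r : 0 < r < v -> col_shift j r != j.
Proof.
case/andP => r0 rv; apply/negP => /eqP /(congr1 val); rewrite col_shift_val /=.
have jv := ltn_ord j; case: (ltnP (j + r) v) => jr.
  by rewrite modn_small //; lia.
by rewrite -(subnK jr) modnDr modn_small; lia.
Qed.

Lemma rel_shift_neq0 (s t : 'I_v) : s != t -> (t + (v - s)) %% v != 0.
Proof.
move=> st; have sv := ltn_ord s; have tv := ltn_ord t.
have st' : (s : nat) != t by [].
case: (leqP s t) => ts.
  by rewrite (_ : t + (v - s) = (t - s) + v) ?modnDr ?modn_small; lia.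
by rewrite modn_small; lia.
Qed.
End ColumnShift.

Section Cells.
Variables u v : nat.

(* Points are the cells of a u x v array; a block (A, s) is the support of
   the codeword A cyclically shifted left by s columns. *)
Local Notation cell := ('I_u * 'I_v)%type.
Local Notation shifted_word := ('M[bool]_(u, v) * 'I_v)%type.

Definition cshift (s : nat) (p : cell) : cell := (p.1, col_shift p.2 s).
Definition in_shift (p : cell) (k : shifted_word) : bool := k.1 p.1 (col_shift p.2 k.2).

Lemma cshift_inj s : injective (cshift s).
Proof. by move=> [i j] [i' j'] [-> /col_shift_inj ->]. Qed.

Lemma card_cshift (P : pred cell) s : #|[set p | P (cshift s p)]| = #|[set p | P p]|.
Proof.
by rewrite -[RHS](card_preimset _ (@cshift_inj s)); apply: eq_card => p; rewrite !inE.
Qed.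

Lemma hweight_card (A : 'M[bool]_(u, v)) : hweight A = #|[set p : cell | A p.1 p.2]|.
Proof. by rewrite /hweight pair_bigA card_sum_bool. Qed.

Lemma corr_card (A B : 'M[bool]_(u, v)) r :
  corr A B r = #|[set p : cell | A p.1 p.2 && B p.1 (col_shift p.2 r)]|.
Proof. by rewrite /corr pair_bigA card_sum_bool. Qed.

Section HalfTurn.
Variable h : nat.
Hypothesis hh : h + h = v.
Hypothesis h0 : 0 < h.

Definition half_word (k : shifted_word) : shifted_word := (k.1, col_shift k.2 h).

Lemma cshift_halfK : involutive (cshift h).
Proof. by case=> i j; rewrite /cshift /= col_shiftD hh col_shift_v. Qed.

Lemma cshift_half_moves p : cshift h p != p.
Proof. by case: p => i j; rewrite /cshift xpair_eqE eqxx /= col_shift_moves //; lia. Qed.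

Lemma half_wordK : involutive half_word.
Proof. by case=> A s; rewrite /half_word /= col_shiftD hh col_shift_v. Qed.

Lemma half_word_moves k : half_word k != k.
Proof. by case: k => A s; rewrite /half_word xpair_eqE eqxx /= col_shift_moves //; lia. Qed.

Lemma in_shift_half p k : in_shift (cshift h p) k = in_shift p (half_word k).
Proof. by case: k => A s; rewrite /in_shift /= col_shiftD col_shift_val col_shift_mod addnC. Qed.
End HalfTurn.

Section Code.
Variables (C : {set 'M[bool]_(u, v)}).
Hypothesis C_OOC : is_OOC C.

Definition shift_blocks : {set shifted_word} := [set k | k.1 \in C].

Lemma shift_block_size k : k \in shift_blocks -> #|[set p | in_shift p k]| = 4.
Proof.
case: k => A s; rewrite inE /= => AC; move: C_OOC => /andP [/forall_inP /(_ A AC) /eqP].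
by rewrite hweight_card -(card_cshift _ s) => <-.
Qed.

(* Two distinct shifted codewords meet in corr A B r cells, where r is their
   relative shift, which is nonzero if A = B. *)
Lemma shift_block_meet k k' : k \in shift_blocks -> k' \in shift_blocks -> k != k' ->
  #|[set p | in_shift p k && in_shift p k']| <= 2.
Proof.
case: k k' => [A s] [B t]; rewrite !inE /= => AC BC kk'.
pose r := col_shift t (v - s).
have -> : #|[set p | in_shift p (A, s) && in_shift p (B, t)]| = corr A B r.
  rewrite corr_card -(card_cshift _ (v - s)); apply: eq_card => p.
  rewrite !inE /in_shift /= !col_shiftD subnK ?(ltnW (ltn_ord s)) // col_shift_v.
  by rewrite col_shift_val col_shift_mod addnC.
move: C_OOC => /andP [_ /forall_inP /(_ A AC) /forall_inP /(_ B BC) /forallP /(_ r)].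
move=> /implyP; apply; case: (eqVneq A B) => [eAB|] //=; rewrite col_shift_val modn_mod.
by apply: rel_shift_neq0; apply: contraNneq kk' => ->; rewrite eAB.
Qed.

Lemma card_shift_blocks : #|shift_blocks| = #|C| * v.
Proof.
have -> : shift_blocks = setX C [set: 'I_v] by apply/setP => k; rewrite !inE andbT.
by rewrite cardsX cardsT card_ord.
Qed.
End Code.
End Cells.

Lemma OOC_count_bound u v (C : {set 'M[bool]_(u, v)}) h d :
  is_OOC C -> 0 < u -> h + h = v -> 0 < h -> 4 %| u * v ->
  (u * v - 1) * (u * v - 2) = 6 * d + 8 -> 4 * (#|C| * v) < u * v * d.
Proof.
move=> C_OOC u0 hh h0 uv4 nd.
have cell0 : 'I_u * 'I_v by split; [exact: Ordinal u0 | apply: (@Ordinal v 0); lia].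
have card_cell : #|{: 'I_u * 'I_v}| = u * v by rewrite card_prod !card_ord.
rewrite -card_shift_blocks -card_cell.
apply: (@packing_bound _ _ (@in_shift u v) (shift_blocks C) _ _ _ (cshift h) (half_word h)).
- exact: shift_block_size.
- exact: shift_block_meet.
- by rewrite card_cell.
- exact: cshift_halfK hh.
- exact: cshift_half_moves.
- exact: half_wordK hh.
- exact: half_word_moves.
- exact: in_shift_half.
- by move=> k; rewrite !inE.
- exact: cell0.
- by rewrite card_cell.
Qed.

(* With n = u v = 24 m, the bound of the theorem is 3 a D - 1 where u = 12 a
   and D = 96 m^2 - 12 m - 1; note (n - 1)(n - 2) = 6 D + 8. *)
Lemma bound_closed_form u a m : u = 12 * a -> 0 < m ->
  (u * (((24 * m - 1) * ((24 * m - 2) %/ 2)) %/ 3 - 1)) %/ 4 - 1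
  = 3 * a * (96 * m * m - 12 * m - 1) - 1.
Proof.
move=> -> m0.
have -> : (24 * m - 2) %/ 2 = 12 * m - 1.
  by rewrite -(@mulnK (12 * m - 1) 2) //; congr (_ %/ 2); lia.
have -> : (24 * m - 1) * (12 * m - 1) = (96 * m * m - 12 * m) * 3 + 1 by nia.
rewrite divnMDl // (divn_small (isT : 1 < 3)) addn0.
have -> : 12 * a * (96 * m * m - 12 * m - 1) = 3 * a * (96 * m * m - 12 * m - 1) * 4 by lia.
by rewrite mulnK.
Qed.

Theorem lemma5p2 (u v : nat) :
  0 < u -> u %% 12 = 0 -> (v %% 6 = 2 \/ v %% 6 = 4) ->
  Phi u v <=
    (u * (((u * v - 1) * ((u * v - 2) %/ 2)) %/ 3 - 1)) %/ 4 - 1.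
Proof.
move=> u0 u12 v6.
have [a ua] : exists a, u = 12 * a by exists (u %/ 12); lia.
have [h vh] : exists h, v = h + h by exists (v %/ 2); lia.
have h0 : 0 < h by lia.
have uvm : u * v = 24 * (a * h) by rewrite ua vh; lia.
have m0 : 0 < a * h by rewrite muln_gt0; apply/andP; split; lia.
move: (a * h) uvm m0 => m uvm m0; set D := 96 * m * m - 12 * m - 1.
have nD : (u * v - 1) * (u * v - 2) = 6 * D + 8 by rewrite uvm /D; nia.
have uv4 : 4 %| u * v by rewrite uvm; lia.
rewrite uvm (bound_closed_form ua m0); apply/bigmax_leqP => C C_OOC.
have := OOC_count_bound C_OOC u0 (esym vh) h0 uv4 nD.
move: #|C| => c; rewrite ua => lt.
have : v * (4 * c) < v * (4 * (3 * a * D)) by lia.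
by rewrite !ltn_pmul2l ?vh //; lia.
Qed.
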